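(* (1) Let $\mathbb{F}=\langle x_1,\dots,x_n,y_1,\dots,y_m\rangle$ be free, $e\in\langle y_1,\dots,y_m\rangle$, and $\rho\in\mathcal{R}(\mathbb{F})=\mathrm{Hom}(\mathbb{F},SL(2,\mathbb{C}))$ with $\operatorname{trace}(\rho(e))\neq -2$. Let $S=(U,\widetilde U,P)$ be a standard neighborhood of $\rho(e)$ and let $V\subset\mathcal{R}(\mathbb{F})$ be an open neighborhood of $\rho$ with $\mathrm{ev}_e(V)\subset U$. Then the map $\tau_H\colon V\times P\to\mathcal{R}(\mathbb{F})$ given by $\tau_H(\eta,z)(x_i)=\eta(x_i)$ and $\tau_H(\eta,z)(y_j)=$ the conjugate of $\eta(y_j)$ by $\exp(z\cdot\log(\eta(e)))$, is holomorphic. (2) Let $\mathbb{F}=\langle x_1,\dots,x_{n-1}\rangle*\langle t\rangle$, $e\in\langle x_1,\dots,x_{n-1}\rangle$, $\rho\in\mathcal{R}(\mathbb{F})$ with $\operatorname{trace}(\rho(e))\neq-2$, and $S=(U,\widetilde U,P)$, $V$ as in (1). Then the map $\tau_H\colon V\times P\to\mathcal{R}(\mathbb{F})$ given by $\tau_H(\eta,z)(x_i)=\eta(x_i)$, $\tau_H(\eta,z)(t)=\eta(t)\exp(z\cdot\log(\eta(e)))$, is holomorphic.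
   Context: $\mathcal{R}(\mathbb{F})=\mathrm{Hom}(\mathbb{F},SL(2,\mathbb{C}))\cong SL(2,\mathbb{C})^{r}\subset\mathbb{C}^{4r}$ for $\mathbb{F}$ free of rank $r$, and $\mathrm{ev}_g\colon\mathcal{R}(\mathbb{F})\to SL(2,\mathbb{C})$, $\eta\mapsto\eta(g)$. For $\epsilon>0$, $P_\epsilon$ is the $\epsilon$-neighborhood of $[0,1]$ in $\mathbb{C}$. A standard neighborhood of $g\in SL(2,\mathbb{C})$ (with $\operatorname{trace}g\ne-2$) is a tuple $(U_g,\widetilde U_g,P)$ where $P=P_\epsilon$, $\widetilde U_g\subset\mathfrak{sl}_2\mathbb{C}$ is an open neighborhood of some $v_g$ with $\exp(v_g)=g$, $U_g=\exp(\widetilde U_g)$, $\exp(P\cdot\widetilde U_g)\subset SL(2,\mathbb{C})\setminus\{-I\}$, $\exp$ restricted to the $\epsilon$-neighborhood of $\{sv_g:s\in[0,1]\}$ is biholomorphic onto its image, and $P\cdot\widetilde U_g$ is contained in that neighborhood. For $h\in U_g$, $\log(h)$ denotes the unique $v\in\widetilde U_g$ with $\exp(v)=h$. *)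

From mathcomp Require Import all_boot all_order all_algebra.
From mathcomp Require Import all_classical all_reals all_analysis.
From mathcomp.real_closed Require Import complex.
Import numFieldNormedType.Exports.
Import Order.TTheory GRing.Theory Num.Theory.

Set Implicit Arguments.
Unset Strict Implicit.
Unset Printing Implicit Defensive.

Local Open Scope ring_scope.
Local Open Scope complex_scope.
Local Open Scope classical_set_scope.

Section Defs.
Variable R : realType.
Local Notation C := (R[i]^o).

Definition holo_on (U W : normedModType C) (D : set U) (f : U -> W) : Prop :=
  forall p, D p ->
    exists O : set U, [/\ open O, O p &
      exists g : U -> W,
        (forall q, O q -> differentiable g q) /\
        (forall q, D q -> O q -> f q = g q)].

Definition expm (v : 'M[C]_2) : 'M[C]_2 :=
  lim ((fun N : nat => \sum_(k < N) (k`!%:R)^-1 *: v ^+ k) @ \oo).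

Definition sl2 : set 'M[C]_2 := [set v | \tr v = 0].
Definition SL2 : set 'M[C]_2 := [set g | \det g = 1].

Definition Peps (eps : R) : set C :=
  [set z | exists s : R, [/\ 0 <= s, s <= 1 & `|z - s%:C| < eps%:C]].

Definition segnbhd (eps : R) (v : 'M[C]_2) : set 'M[C]_2 :=
  [set w | sl2 w /\ exists s : R, [/\ 0 <= s, s <= 1 & `|w - s%:C *: v| < eps%:C]].

Definition std_nbhd (g : 'M[C]_2) (U Ut : set 'M[C]_2) (eps : R) : Prop :=
  exists vg : 'M[C]_2,
  [/\ (0 < eps /\ exists O : set 'M[C]_2, open O /\ Ut = O `&` sl2) /\ Ut vg /\ expm vg = g,
      U = expm @` Ut,
      (forall z v, Peps eps z -> Ut v ->
         SL2 (expm (z *: v)) /\ expm (z *: v) <> -1),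
      [/\ holo_on (segnbhd eps vg) expm,
          (forall w1 w2, segnbhd eps vg w1 -> segnbhd eps vg w2 ->
             expm w1 = expm w2 -> w1 = w2) &
          exists h : 'M[C]_2 -> 'M[C]_2,
            (forall w, segnbhd eps vg w -> h (expm w) = w) /\
            holo_on (expm @` segnbhd eps vg) h]
    & (forall z v, Peps eps z -> Ut v -> segnbhd eps vg (z *: v))].

Definition logS (Ut : set 'M[C]_2) (h : 'M[C]_2) : 'M[C]_2 :=
  xget 0 [set v | Ut v /\ expm v = h].

(* R(F) for F free of rank r: tuples of r matrices, encoded as an r x 4 matrix
   whose i-th row is mxvec of the image of the i-th generator. *)
Definition rep_gen (r : nat) (M : 'M[C]_(r, 2 * 2)) (i : 'I_r) : 'M[C]_2 :=
  vec_mx (row i M).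
Definition rep_enc (r : nat) (f : 'I_r -> 'M[C]_2) : 'M[C]_(r, 2 * 2) :=
  \matrix_(i, j) (mxvec (f i)) 0 j.
Definition RepF (r : nat) : set 'M[C]_(r, 2 * 2) :=
  [set M | forall i, SL2 (rep_gen M i)].

(* elements of a free group on generators indexed by I, as words:
   (j, false) is the letter a_j, (j, true) is a_j^{-1} *)
Definition word (I : Type) := seq (I * bool).
Definition eval_word (I : Type) (gen : I -> 'M[C]_2) (w : word I) : 'M[C]_2 :=
  \prod_(l <- w) (if l.2 then invmx (gen l.1) else gen l.1).

(* part (1): F = <x_1..x_n, y_1..y_m>, generator x_i is lshift m i,
   generator y_j is rshift n j *)
Definition ev_y (n m : nat) (w : word 'I_m) (eta : 'M[C]_(n + m, 2 * 2)) :=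
  eval_word (fun j => rep_gen eta (rshift n j)) w.

Definition tauH1 (n m : nat) (e : word 'I_m) (Ut : set 'M[C]_2)
    (p : ('M[C]_(n + m, 2 * 2) * C)%type) : 'M[C]_(n + m, 2 * 2) :=
  let eta := p.1 in
  let g := expm (p.2 *: logS Ut (ev_y e eta)) in
  rep_enc (fun i => match fintype.split i with
                    | inl _ => rep_gen eta i
                    | inr _ => g * rep_gen eta i * invmx g
                    end).

(* part (2): F = <x_1..x_k> * <t> (k = n-1), generator x_i is lshift 1 i,
   generator t is rshift k ord0 *)
Definition ev_x (k : nat) (w : word 'I_k) (eta : 'M[C]_(k + 1, 2 * 2)) :=
  eval_word (fun j => rep_gen eta (lshift 1 j)) w.

Definition tauH2 (k : nat) (e : word 'I_k) (Ut : set 'M[C]_2)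
    (p : ('M[C]_(k + 1, 2 * 2) * C)%type) : 'M[C]_(k + 1, 2 * 2) :=
  let eta := p.1 in
  let g := expm (p.2 *: logS Ut (ev_x e eta)) in
  rep_enc (fun i => match fintype.split i with
                    | inl _ => rep_gen eta i
                    | inr _ => rep_gen eta i * g
                    end).

End Defs.

From mathcomp Require Import all_boot all_order all_algebra.
From mathcomp Require Import all_classical all_reals all_analysis.
From mathcomp.real_closed Require Import complex.
Import numFieldNormedType.Exports.
Import Order.TTheory GRing.Theory Num.Theory.

Set Implicit Arguments.
Unset Strict Implicit.
Unset Printing Implicit Defensive.

Local Open Scope ring_scope.
Local Open Scope complex_scope.
Local Open Scope classical_set_scope.

(** On the representation variety inverses are adjugates, so [eta |-> eta(e)]
   is polynomial in the entries of [eta], and [tau_H(eta, z)] is polynomial in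
   [eta] and in [g = exp (z log eta(e))], which lies in SL(2,C).  The standard
   neighbourhood makes [log] holomorphic on [U]: it is the holomorphic inverse
   of [exp] on the eps-neighbourhood of the segment, which contains [Ut].  It
   also makes [(z, v) |-> exp (z v)] holomorphic on [P x Ut], so [tau_H] is a
   composite of holomorphic maps. *)

Section MatrixDifferentiable.
Variables (K : numFieldType) (V : normedModType K).

Lemma differentiable_fst (W : normedModType K) (x : V * W) :
  differentiable (@fst V W) x.
Proof. by apply: linear_differentiable => y; apply: cvg_fst. Qed.

Lemma differentiable_snd (W : normedModType K) (x : W * V) :
  differentiable (@snd W V) x.
Proof. by apply: linear_differentiable => y; apply: cvg_snd. Qed.

Lemma differentiable_big (W : normedModType K) (idx : W) (op : W -> W -> W)
    (I : Type) (r : seq I) (F : I -> V -> W) (x : V) :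
  (forall f g : V -> W, differentiable f x -> differentiable g x ->
     differentiable (fun q => op (f q) (g q)) x) ->
  (forall i, differentiable (F i) x) ->
  differentiable (fun q => \big[op/idx]_(i <- r) F i q) x.
Proof.
move=> dop dF; elim: r => [|i r IHr].
  by under eq_fun do rewrite big_nil; apply: differentiable_cst.
by under eq_fun do rewrite big_cons; apply: dop.
Qed.

Lemma differentiable_mxE m n (F : V -> 'M[K^o]_(m, n)) x i j :
  differentiable F x -> differentiable (fun q => F q i j) x.
Proof. by move=> dF; apply: (differentiable_comp dF (differentiable_coord _ i j)). Qed.

Lemma differentiable_matrix m n (F : V -> 'M[K^o]_(m, n)) x :
  (forall i j, differentiable (fun q => F q i j) x) -> differentiable F x.
Proof.
move=> dF; rewrite (_ : F = fun q => \sum_i \sum_j F q i j *: delta_mx i j).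
  apply: differentiable_big => [f g|i]; first exact: differentiableD.
  apply: differentiable_big => [f g|j]; first exact: differentiableD.
  exact: differentiableZl.
by apply: funext => q; rewrite -matrix_sum_delta.
Qed.

Lemma differentiable_mulmx m n p (F : V -> 'M[K^o]_(m, n))
    (G : V -> 'M[K^o]_(n, p)) x :
  differentiable F x -> differentiable G x ->
  differentiable (fun q => F q *m G q) x.
Proof.
move=> dF dG; apply: differentiable_matrix => i j; under eq_fun do rewrite mxE.
apply: differentiable_big => [f g|k]; first exact: differentiableD.
by apply: differentiableM; apply: differentiable_mxE.
Qed.

Lemma differentiable_scalemx m n (c : V -> K^o) (F : V -> 'M[K^o]_(m, n)) x :
  differentiable c x -> differentiable F x ->
  differentiable (fun q => c q *: F q) x.
Proof.
move=> dc dF; apply: differentiable_matrix => i j; under eq_fun do rewrite mxE.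
by apply: differentiableM => //; apply: differentiable_mxE.
Qed.

Lemma differentiable_det n (F : V -> 'M[K^o]_n) x :
  differentiable F x -> differentiable (fun q => \det (F q)) x.
Proof.
move=> dF; apply: differentiable_big => [f g|s]; first exact: differentiableD.
apply: differentiableM; first exact: differentiable_cst.
apply: differentiable_big => [f g|i]; first exact: differentiableM.
exact: differentiable_mxE.
Qed.

Lemma differentiable_adj n (F : V -> 'M[K^o]_n) x :
  differentiable F x -> differentiable (fun q => \adj (F q)) x.
Proof.
move=> dF; apply: differentiable_matrix => i j; under eq_fun do rewrite mxE.
apply: differentiableM; first exact: differentiable_cst.
apply: differentiable_det; apply: differentiable_matrix => k l.
by under eq_fun do rewrite !mxE; apply: differentiable_mxE.
Qed.

End MatrixDifferentiable.

Section Holomorphy.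
Context {R : realType}.
Local Notation C := (R[i]^o).

Lemma holo_on_subset (U W : normedModType C) (D D' : set U) (f : U -> W) :
  holo_on D f -> D' `<=` D -> holo_on D' f.
Proof.
move=> fD subD p /subD /fD [N [oN Np [g [dg fg]]]].
by exists N; split=> //; exists g; split=> // q /subD; apply: fg.
Qed.

Lemma holo_on_eq (U W : normedModType C) (D : set U) (f g : U -> W) :
  (forall q, D q -> f q = g q) -> holo_on D g -> holo_on D f.
Proof.
move=> fg gD p /gD [N [oN Np [h [dh gh]]]].
by exists N; split=> //; exists h; split=> // q Dq Nq; rewrite fg // gh.
Qed.

Lemma differentiable_holo_on (U W : normedModType C) (D : set U) (f : U -> W) :
  (forall x, differentiable f x) -> holo_on D f.
Proof. by move=> df p _; exists setT; split=> //; [exact: openT | exists f]. Qed.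

Lemma holo_on_pair (U W1 W2 : normedModType C) (D : set U)
    (f : U -> W1) (g : U -> W2) :
  holo_on D f -> holo_on D g -> holo_on D (fun q => (f q, g q)).
Proof.
move=> fD gD p Dp.
have [N1 [oN1 N1p [f' [df' ff']]]] := fD p Dp.
have [N2 [oN2 N2p [g' [dg' gg']]]] := gD p Dp.
exists (N1 `&` N2); split=> //; first exact: openI.
exists (fun q => (f' q, g' q)); split.
  by move=> q [N1q N2q]; apply: differentiable_pair; [apply: df' | apply: dg'].
by move=> q Dq [N1q N2q]; rewrite ff' // gg'.
Qed.

Lemma holo_on_comp (U W1 W2 : normedModType C) (D : set U) (S : set W1)
    (f : U -> W1) (h : W1 -> W2) :
  holo_on S h -> holo_on D f -> (forall q, D q -> S (f q)) ->
  holo_on D (fun q => h (f q)).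
Proof.
move=> hS fD DS p Dp.
have [N1 [oN1 N1p [f' [df' ff']]]] := fD p Dp.
have [N2 [oN2 N2fp [h' [dh' hh']]]] := hS (f p) (DS p Dp).
exists (N1 `&` f' @^-1` N2); split.
- rewrite openE => q [N1q N2f'q].
  have f'q_cont := differentiable_continuous (df' q N1q).
  rewrite /interior; near=> y; split; near: y.
    by apply: open_nbhs_nbhs.
  by apply: f'q_cont; apply: open_nbhs_nbhs.
- by split=> //; rewrite /preimage /= -ff'.
exists (fun q => h' (f' q)); split.
  by move=> q [N1q N2f'q]; apply: (differentiable_comp (df' q N1q)); apply: dh'.
by move=> q Dq [N1q N2f'q]; rewrite -ff' //; apply: hh'; [apply: DS | rewrite ff'].
Unshelve. all: by end_near. Qed.

End Holomorphy.

Section StandardNeighbourhood.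
Context {R : realType}.
Local Notation C := (R[i]^o).

Lemma Peps_1 (eps : R) : 0 < eps -> Peps eps 1.
Proof. by move=> eps_gt0; exists 1; split=> //; rewrite subrr normr0 ltcR. Qed.

Variables (g0 : 'M[C]_2) (U Ut : set 'M[C]_2) (eps : R).
Hypothesis std : std_nbhd g0 U Ut eps.

Lemma std_nbhd_logS g : U g -> Ut (logS Ut g) /\ expm (logS Ut g) = g.
Proof.
have [_ [_ -> _ _ _]] := std; case=> v Utv <-.
exact (xgetPex 0 (ex_intro [set w | Ut w /\ expm w = expm v] v (conj Utv erefl))).
Qed.

Lemma holo_on_logS : holo_on U (logS Ut).
Proof.
have [vg [[[eps_gt0 _] _] _ _ [_ _ [h [hK hh]]] PUt_seg]] := std.
have seg_logS g : U g -> segnbhd eps vg (logS Ut g).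
  move=> /std_nbhd_logS [Ut_logS _].
  by rewrite -[logS _ _]scale1r; apply: PUt_seg => //; apply: Peps_1.
apply: (holo_on_eq (g := h)) => [g Ug|].
  by have [_ {2}<-] := std_nbhd_logS Ug; rewrite hK //; apply: seg_logS.
apply: (holo_on_subset hh) => g Ug; exists (logS Ut g); first exact: seg_logS.
by case: (std_nbhd_logS Ug).
Qed.

Lemma holo_on_expm_scale :
  holo_on [set zv : C * 'M[C]_2 | Peps eps zv.1 /\ Ut zv.2]
    (fun zv => expm (zv.1 *: zv.2)).
Proof.
have [vg [_ _ _ [hexp _ _] PUt_seg]] := std.
apply: (holo_on_comp hexp) => [|[z v] [/= Pz Utv]]; last exact: PUt_seg.
apply: differentiable_holo_on => zv.
by apply: differentiable_scalemx; [apply: differentiable_fst | apply: differentiable_snd].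
Qed.

Lemma SL2_expm_scale z v : Peps eps z -> Ut v -> SL2 (expm (z *: v)).
Proof. by have [_ [_ _ expm_SL2 _ _]] := std => Pz Utv; case: (expm_SL2 z v Pz Utv). Qed.

Lemma holo_on_twist (W X : normedModType C) (V : set W) (ev : W -> 'M[C]_2)
    (Phi : W * 'M[C]_2 -> X) :
  holo_on V ev -> (forall eta, V eta -> U (ev eta)) ->
  holo_on [set q | V q.1 /\ SL2 q.2] Phi ->
  holo_on [set p : W * C | V p.1 /\ Peps eps p.2]
    (fun p => Phi (p.1, expm (p.2 *: logS Ut (ev p.1)))).
Proof.
move=> evV VU PhiV.
have Ut_logS p : V p -> Ut (logS Ut (ev p)) by move=> /VU /std_nbhd_logS [].
apply: (holo_on_comp PhiV) => [|p [Vp Pp]]; last first.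
  by split=> //; apply: SL2_expm_scale => //; apply: Ut_logS.
apply: holo_on_pair; first exact: differentiable_holo_on (@differentiable_fst _ _ _).
apply: (holo_on_comp (f := fun p => (p.2, logS Ut (ev p.1))) holo_on_expm_scale);
  last by move=> p [Vp Pp]; split=> //; apply: Ut_logS.
apply: holo_on_pair; first exact: differentiable_holo_on (@differentiable_snd _ _ _).
apply: (holo_on_comp holo_on_logS) => [|p [Vp _]]; last exact: VU.
apply: (holo_on_comp evV) => [|p []] //.
exact: differentiable_holo_on (@differentiable_fst _ _ _).
Qed.

End StandardNeighbourhood.

Section Representations.
Context {R : realType}.
Local Notation C := (R[i]^o).

Lemma invmx_SL2 (A : 'M[C]_2) : SL2 A -> invmx A = \adj A.
Proof. by move=> detA; rewrite /invmx unitmxE detA unitr1 invr1 scale1r. Qed.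

Lemma eval_word_SL2 (I : Type) (gen : I -> 'M[C]_2) (w : word I) :
  (forall j, SL2 (gen j)) ->
  eval_word gen w = \prod_(l <- w) (if l.2 then \adj (gen l.1) else gen l.1).
Proof. by move=> gen_SL2; apply: eq_bigr => -[j []] _ //=; rewrite invmx_SL2. Qed.

Lemma differentiable_rep_gen r i (eta : 'M[C]_(r, 2 * 2)) :
  differentiable (@rep_gen R r ^~ i) eta.
Proof.
apply: differentiable_matrix => a b; under eq_fun do rewrite !mxE.
exact: differentiable_coord.
Qed.

Lemma differentiable_rep_enc (W : normedModType C) r (F : W -> 'I_r -> 'M[C]_2) x :
  (forall i, differentiable (F ^~ i) x) -> differentiable (fun q => rep_enc (F q)) x.
Proof.
move=> dF; apply: differentiable_matrix => i j; case/mxvec_indexP: j => a b.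
by under eq_fun do rewrite mxE mxvecE; apply: differentiable_mxE.
Qed.

Lemma holo_on_eval_word r (I : Type) (gi : I -> 'I_r) (w : word I) :
  holo_on (@RepF R r) (fun eta => eval_word (fun j => rep_gen eta (gi j)) w).
Proof.
apply: (holo_on_eq (g := fun eta => \prod_(l <- w)
          (if l.2 then \adj (rep_gen eta (gi l.1)) else rep_gen eta (gi l.1)))).
  by move=> eta eta_SL2; apply: eval_word_SL2 => j; apply: eta_SL2.
apply: differentiable_holo_on => eta.
apply: differentiable_big => [f g|[j []]] /=; first exact: differentiable_mulmx.
  exact/differentiable_adj/differentiable_rep_gen.
exact: differentiable_rep_gen.
Qed.

Definition conj_twist n m (q : 'M[C]_(n + m, 2 * 2) * 'M[C]_2) :=
  rep_enc (fun i => match fintype.split i with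
                    | inl _ => rep_gen q.1 i
                    | inr _ => q.2 * rep_gen q.1 i * invmx q.2
                    end).

Definition mul_twist n m (q : 'M[C]_(n + m, 2 * 2) * 'M[C]_2) :=
  rep_enc (fun i => match fintype.split i with
                    | inl _ => rep_gen q.1 i
                    | inr _ => rep_gen q.1 i * q.2
                    end).

Lemma differentiable_rep_gen_fst r i (q : 'M[C]_(r, 2 * 2) * 'M[C]_2) :
  differentiable (fun q : 'M[C]_(r, 2 * 2) * 'M[C]_2 => rep_gen q.1 i) q.
Proof.
exact: (differentiable_comp (differentiable_fst _) (differentiable_rep_gen _ _)).
Qed.

Lemma holo_on_conj_twist n m : holo_on [set q | SL2 q.2] (@conj_twist n m).
Proof.
apply: (holo_on_eq (g := fun q : 'M[C]_(n + m, 2 * 2) * 'M[C]_2 =>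
  rep_enc (fun i => match fintype.split i with
                    | inl _ => rep_gen q.1 i
                    | inr _ => q.2 * rep_gen q.1 i * \adj q.2
                    end))).
  by move=> q q_SL2; rewrite /conj_twist invmx_SL2.
apply: differentiable_holo_on => q; apply: differentiable_rep_enc => i.
case: (fintype.split i) => _; first exact: differentiable_rep_gen_fst.
apply: differentiable_mulmx; last exact/differentiable_adj/differentiable_snd.
exact: differentiable_mulmx (differentiable_snd _) (differentiable_rep_gen_fst _ _).
Qed.

Lemma differentiable_mul_twist n m q : differentiable (@mul_twist n m) q.
Proof.
apply: differentiable_rep_enc => i; case: (fintype.split i) => _.
  exact: differentiable_rep_gen_fst.
exact: differentiable_mulmx (differentiable_rep_gen_fst _ _) (differentiable_snd _).
Qed.

End Representations.

Theorem lemma3p4 (R : realType) :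
  (forall (n m : nat) (e : word 'I_m) (rho : 'M[R[i]^o]_(n + m, 2 * 2))
      (U Ut : set 'M[R[i]^o]_2) (eps : R) (V : set 'M[R[i]^o]_(n + m, 2 * 2)),
    RepF rho ->
    \tr (ev_y e rho) != -2 ->
    std_nbhd (ev_y e rho) U Ut eps ->
    (exists O, open O /\ V = O `&` @RepF R (n + m)) ->
    V rho ->
    (forall eta, V eta -> U (ev_y e eta)) ->
    holo_on [set p : ('M[R[i]^o]_(n + m, 2 * 2) * R[i]^o)%type |
               V p.1 /\ Peps eps p.2]
            (tauH1 e Ut))
  /\
  (forall (k : nat) (e : word 'I_k) (rho : 'M[R[i]^o]_(k + 1, 2 * 2))
      (U Ut : set 'M[R[i]^o]_2) (eps : R) (V : set 'M[R[i]^o]_(k + 1, 2 * 2)),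
    RepF rho ->
    \tr (ev_x e rho) != -2 ->
    std_nbhd (ev_x e rho) U Ut eps ->
    (exists O, open O /\ V = O `&` @RepF R (k + 1)) ->
    V rho ->
    (forall eta, V eta -> U (ev_x e eta)) ->
    holo_on [set p : ('M[R[i]^o]_(k + 1, 2 * 2) * R[i]^o)%type |
               V p.1 /\ Peps eps p.2]
            (tauH2 e Ut)).
Proof.
(* The trace condition, [RepF rho], [V rho] and the openness of [V] only serve
   to make a standard neighbourhood exist; here one is given. *)
split=> [n m e | k e] rho U Ut eps V _ _ std [N [_ ->]] _ VU.
- apply: (holo_on_twist std (Phi := @conj_twist R n m)) VU _.
    by apply: (holo_on_subset (holo_on_eval_word _ _)) => eta [].
  by apply: (holo_on_subset (@holo_on_conj_twist R n m)) => q [_].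
- apply: (holo_on_twist std (Phi := @mul_twist R k 1)) VU _.
    by apply: (holo_on_subset (holo_on_eval_word _ _)) => eta [].
  exact: differentiable_holo_on (@differentiable_mul_twist R k 1).
Qed.
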